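(* There exists a set $A\subseteq\omega^\omega$ (e.g. $A=\{\bar 0\}$, the singleton of the all-zero sequence) such that both $A$ and its complement $\omega^\omega\setminus A$ are computably enumerable in Kleene's second model $\mathcal{K}_2$, but $A$ is not decidable in $\mathcal{K}_2$.
   Context: Kleene's second model $\mathcal{K}_2$ is the pca with underlying set $\omega^\omega$ in which $\alpha\cdot\beta$ is the result of applying the continuous (partial) functional coded by $\alpha$ to $\beta$. In a pca $\mathcal{A}$, with $\mathsf{true}=k$ and $\mathsf{false}=ki$ ($i=skk$, where $k,s$ are the standard combinators), a set $A\subseteq\mathcal{A}$ is decidable if there is a total $c\in\mathcal{A}$ with $ca=\mathsf{true}$ iff $a\in A$ and $ca=\mathsf{false}$ iff $a\notin A$; $A$ is computably enumerable (c.e.) in $\mathcal{A}$ if $A=\{a\mid ea\downarrow\}$ for some $e\in\mathcal{A}$. *)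

From Stdlib Require Import Arith List.
Import ListNotations.

Definition baire := nat -> nat.

Definition cpair (x y : nat) : nat := (x + y) * (x + y + 1) / 2 + y.

Fixpoint code (l : list nat) : nat :=
  match l with
  | [] => 0
  | x :: l' => S (cpair x (code l'))
  end.

Definition prefix (b : baire) (m : nat) : list nat := map b (seq 0 m).

Definition app (a b g : baire) : Prop :=
  forall n, exists m,
    0 < a (code (n :: prefix b m)) /\
    (forall m', m' < m -> a (code (n :: prefix b m')) = 0) /\
    g n = a (code (n :: prefix b m)) - 1.

Definition defined (a b : baire) : Prop := exists g, app a b g.

Definition is_k (k : baire) : Prop :=
  forall x y, exists kx, app k x kx /\ app kx y x.

Definition is_s (s : baire) : Prop :=
  forall x y, exists sx sxy, app s x sx /\ app sx y sxy /\
    forall z w, app sxy z w <->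
      exists xz yz, app x z xz /\ app y z yz /\ app xz yz w.

(* false = k i with i = s k k ; true = k *)
Definition is_false (k s f : baire) : Prop :=
  exists sk i, app s k sk /\ app sk k i /\ app k i f.

Definition decidable (k s : baire) (A : baire -> Prop) : Prop :=
  exists c f, is_false k s f /\
    (forall a, defined c a) /\
    (forall a, app c a k <-> A a) /\
    (forall a, app c a f <-> ~ A a).

Definition ce (A : baire -> Prop) : Prop :=
  exists e, forall a, defined e a <-> A a.

(* Application in K2 is continuous: the n-th output of [c . a] is determined by
   a finite prefix of [a].  Since [true = k] and [false = k i] differ at some
   argument n, a decider for A has constant value on a neighbourhood of every
   point, so a decidable set is open.  The singleton of the zero sequence is not
   open (the sequence 0^m 1 1 1 ... is arbitrarily close to it), yet it and its
   complement are c.e.: an oracle can accept an input once it has seen a long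
   enough prefix of zeros, respectively a nonzero entry. *)
From Pilot Require Import Defs.
From Stdlib Require Import Arith Lia List Wf_nat Classical ClassicalEpsilon
  FunctionalExtensionality.
Import ListNotations.

Definition triangle (s : nat) : nat := s * (s + 1) / 2.

Lemma triangle_S s : triangle (S s) = triangle s + S s.
Proof.
  unfold triangle. replace (S s * (S s + 1)) with (s * (s + 1) + S s * 2) by lia.
  rewrite Nat.div_add by lia. lia.
Qed.

Lemma triangle_gap s s' : s < s' -> triangle s + s < triangle s'.
Proof.
  induction s' as [|s' IH]; intros Hlt; [lia|].
  rewrite triangle_S. destruct (Nat.eq_dec s s') as [->|Hne]; [lia|].
  specialize (IH ltac:(lia)). lia.
Qed.

Lemma cpair_inj x y x' y' : cpair x y = cpair x' y' -> x = x' /\ y = y'.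
Proof.
  unfold cpair. fold (triangle (x + y)) (triangle (x' + y')). intros E.
  destruct (lt_eq_lt_dec (x + y) (x' + y')) as [[Hlt|Heq]|Hlt].
  - pose proof (triangle_gap _ _ Hlt). lia.
  - rewrite Heq in E. lia.
  - pose proof (triangle_gap _ _ Hlt). lia.
Qed.

Lemma code_inj l l' : code l = code l' -> l = l'.
Proof.
  revert l'; induction l as [|x l IH]; intros [|x' l'] E; simpl in *;
    try discriminate; auto.
  injection E as E. apply cpair_inj in E as [-> E]. f_equal; auto.
Qed.

Lemma length_prefix a m : length (prefix a m) = m.
Proof. unfold prefix. now rewrite length_map, length_seq. Qed.

Lemma in_prefix a m x : In x (prefix a m) <-> exists j, j < m /\ a j = x.
Proof.
  unfold prefix. rewrite in_map_iff. split.
  - intros [j [<- Hj]]. apply in_seq in Hj. exists j; split; [lia|auto].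
  - intros [j [Hj <-]]. exists j; split; auto. apply in_seq; lia.
Qed.

Lemma prefix_ext a a' m :
  (forall j, j < m -> a j = a' j) -> prefix a m = prefix a' m.
Proof.
  intros Hagree. unfold prefix. apply map_ext_in.
  intros j Hj. apply in_seq in Hj. apply Hagree; lia.
Qed.

Lemma app_functional a b g g' : Defs.app a b g -> Defs.app a b g' -> g = g'.
Proof.
  intros H H'. extensionality n.
  destruct (H n) as [m [Hm [Hmin E]]], (H' n) as [m' [Hm' [Hmin' E']]].
  destruct (lt_eq_lt_dec m m') as [[Hlt|<-]|Hlt].
  - specialize (Hmin' _ Hlt); lia.
  - congruence.
  - specialize (Hmin _ Hlt); lia.
Qed.

Lemma app_continuous c a g n : Defs.app c a g ->
  exists m, forall a' g', (forall j, j < m -> a j = a' j) ->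
    Defs.app c a' g' -> g' n = g n.
Proof.
  intros Happ. destruct (Happ n) as [m [Hm [Hmin E]]].
  exists m. intros a' g' Hagree Happ'.
  destruct (Happ' n) as [m' [Hm' [Hmin' E']]].
  assert (Hpre : forall i, i <= m -> prefix a i = prefix a' i)
    by (intros i Hi; apply prefix_ext; intros j Hj; apply Hagree; lia).
  destruct (lt_eq_lt_dec m m') as [[Hlt|<-]|Hlt].
  - specialize (Hmin' _ Hlt). rewrite <- Hpre in Hmin' by lia. lia.
  - rewrite E, E', Hpre by lia. reflexivity.
  - specialize (Hmin _ Hlt). rewrite Hpre in Hmin by lia. lia.
Qed.

(* Any function is a code in K2, so [P] need not be decidable: we decide it by
   excluded middle. *)
Definition prefix_oracle (P : nat -> list nat -> Prop) : baire := fun x =>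
  if excluded_middle_informative (exists n l, x = code (n :: l) /\ P n l)
  then 1 else 0.

Lemma prefix_oracle_pos P n l : 0 < prefix_oracle P (code (n :: l)) <-> P n l.
Proof.
  unfold prefix_oracle. destruct excluded_middle_informative as [[n' [l' [E HP]]]|HnP].
  - split; [intros _|lia]. apply code_inj in E. now injection E as -> ->.
  - split; [lia|]. intros HP. exfalso; eauto.
Qed.

Lemma prefix_oracle_le1 P x : prefix_oracle P x <= 1.
Proof. unfold prefix_oracle. destruct excluded_middle_informative; lia. Qed.

Lemma defined_prefix_oracle P a :
  defined (prefix_oracle P) a <-> forall n, exists m, P n (prefix a m).
Proof.
  split.
  - intros [g Hg] n. destruct (Hg n) as [m [Hm _]].
    exists m. now apply prefix_oracle_pos.
  - intros Hex. exists (fun _ => 0). intros n.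
    destruct (dec_inh_nat_subset_has_unique_least_element
                (fun m => P n (prefix a m)) (fun m => classic _) (Hex n))
      as [m [[HPm Hleast] _]].
    exists m. split; [|split].
    + now apply prefix_oracle_pos.
    + intros m' Hm'. destruct (prefix_oracle P (code (n :: prefix a m'))) eqn:E;
        [reflexivity|].
      assert (HPm' : P n (prefix a m')) by (apply prefix_oracle_pos; lia).
      specialize (Hleast _ HPm'). lia.
    + apply prefix_oracle_pos in HPm.
      pose proof (prefix_oracle_le1 P (code (n :: prefix a m))). lia.
Qed.

Lemma ce_prefix_witnessed (P : nat -> list nat -> Prop) :
  ce (fun a => forall n, exists m, P n (prefix a m)).
Proof. exists (prefix_oracle P). apply defined_prefix_oracle. Qed.

Lemma is_k_app_neq k x kx : is_k k -> Defs.app k x kx -> kx <> k.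
Proof.
  intros Hk Hkx ->.
  assert (Hconst : forall y, Defs.app k y x).
  { intros y. destruct (Hk x y) as [kx' [Hkx' Hkx'y]].
    now rewrite <- (app_functional _ _ _ _ Hkx Hkx') in Hkx'y. }
  destruct (Hk (fun _ => 0) (fun _ => 0)) as [k0 [Hk0 Hk00]].
  destruct (Hk (fun _ => 1) (fun _ => 0)) as [k1 [Hk1 Hk10]].
  rewrite <- (app_functional _ _ _ _ (Hconst _) Hk0) in Hk00.
  rewrite <- (app_functional _ _ _ _ (Hconst _) Hk1) in Hk10.
  pose proof (app_functional _ _ _ _ Hk00 Hk10) as E.
  discriminate (f_equal (fun h => h 0) E).
Qed.

Lemma decidable_open k s A a : is_k k -> decidable k s A -> A a ->
  exists m, forall a', (forall j, j < m -> a j = a' j) -> A a'.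
Proof.
  intros Hk [c [f [[sk [i [_ [_ Hf]]]] [Htot [Htrue Hfalse]]]]] Ha.
  assert (Hn : exists n, k n <> f n).
  { apply NNPP. intros Hall. apply (is_k_app_neq _ _ _ Hk Hf).
    extensionality n. apply NNPP. eauto. }
  destruct Hn as [n Hn].
  destruct (app_continuous c a k n (proj2 (Htrue a) Ha)) as [m Hcont].
  exists m. intros a' Hagree. apply NNPP. intros HnA'.
  apply Hn. symmetry. apply (Hcont a'); auto. now apply Hfalse.
Qed.

Definition zero_seq (a : baire) : Prop := forall i, a i = 0.

Lemma ce_zero_seq : ce zero_seq.
Proof.
  destruct (ce_prefix_witnessed
              (fun n l => n < length l /\ forall x, In x l -> x = 0)) as [e He].
  exists e. intros a. rewrite He. split.
  - intros Hpre i. destruct (Hpre i) as [m [Hlen Hzero]].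
    rewrite length_prefix in Hlen. apply Hzero, in_prefix. eauto.
  - intros Hz n. exists (S n). rewrite length_prefix. split; [lia|].
    intros x Hx. apply in_prefix in Hx as [j [_ <-]]. apply Hz.
Qed.

Lemma ce_not_zero_seq : ce (fun a => ~ zero_seq a).
Proof.
  destruct (ce_prefix_witnessed (fun _ l => exists x, In x l /\ x <> 0)) as [e He].
  exists e. intros a. rewrite He. split.
  - intros Hpre Hz. destruct (Hpre 0) as [m [x [Hx Hne]]].
    apply in_prefix in Hx as [j [_ <-]]. apply Hne, Hz.
  - intros Hnz _. apply not_all_ex_not in Hnz as [i Hi].
    exists (S i), (a i). split; [apply in_prefix; eauto|assumption].
Qed.

Lemma zero_seq_not_open m :
  ~ forall a', (forall j, j < m -> 0 = a' j) -> zero_seq a'.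
Proof.
  intros Hopen.
  specialize (Hopen (fun j => if j <? m then 0 else 1)) as Hz.
  assert (Hagree : forall j, j < m -> 0 = (if j <? m then 0 else 1)).
  { intros j Hj. now apply Nat.ltb_lt in Hj as ->. }
  specialize (Hz Hagree m). cbn beta in Hz.
  now rewrite Nat.ltb_irrefl in Hz.
Qed.

Theorem mainTheorem4 :
  exists A : baire -> Prop,
    ce A /\ ce (fun a => ~ A a) /\
    (forall k s : baire, is_k k -> is_s s -> ~ decidable k s A).
Proof.
  exists zero_seq. split; [exact ce_zero_seq|split; [exact ce_not_zero_seq|]].
  intros k s Hk _ Hdec.
  destruct (decidable_open k s zero_seq (fun _ => 0) Hk Hdec (fun _ => eq_refl))
    as [m Hopen].
  exact (zero_seq_not_open m Hopen).
Qed.
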